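(* Let $(P,A,\lambda)$ be a marked poset, $(U_1,U_2)$ an admissible decomposition, $A_1=A\cup U_1$, and let $\pi_1:\mathbb{R}^{P\setminus A}\to\mathbb{R}^{U_1}$, $\pi_2:\mathbb{R}^{P\setminus A}\to\mathbb{R}^{U_2}$ be the coordinate projections. For a point $s$, let $\lambda^s:A_1\to\mathbb{R}$ be given by $\lambda^s(p)=\lambda_p$ for $p\in A$ and $\lambda^s(p)=s_p$ for $p\in U_1$. Then: (1) for $s\in\mathcal{O}_{P,A}(\lambda)$, $\{\pi_2(y): y\in\mathcal{O}_{P,A}(\lambda),\ \pi_1(y)=\pi_1(s)\}=\mathcal{O}_{P,A_1}(\lambda^s)$; (2) for $s\in\mathcal{CO}_{U_1,U_2}(\lambda)$, $\{\pi_2(y): y\in\mathcal{CO}_{U_1,U_2}(\lambda),\ \pi_1(y)=\pi_1(s)\}=\mathcal{C}_{P,A_1}(\lambda^s)$.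
   Context: A marked poset is a triple $(P,A,\lambda)$ where $(P,\prec)$ is a finite poset, $A\subseteq P$ contains all minimal and all maximal elements of $P$, and $\lambda:A\to\mathbb{Z}_{\ge 0}$, $a\mapsto\lambda_a$. A decomposition of $(P,A,\lambda)$ is a pair $(U_1,U_2)$ of disjoint sets with $U_1\cup U_2=P\setminus A$; it is admissible if there are no $u_1\in U_1$, $u_2\in U_2$ with $u_1\prec u_2$. For any such $(P,A)$, real-valued $\lambda$ on $A$, and decomposition $(U_1,U_2)$ of $P\setminus A$, the marked chain-order polytope $\mathcal{CO}_{U_1,U_2}(\lambda)\subset\mathbb{R}^{P\setminus A}$ is the set of $(x_p)_{p\in P\setminus A}$ such that: (i) $x_p\le\lambda_a$ whenever $p\in U_1$, $a\in A$, $p\prec a$; (ii) $\lambda_b\le x_q$ whenever $q\in U_1$, $b\in A$, $b\prec q$; (iii) $x_p\le x_q$ whenever $p,q\in U_1$, $p\prec q$; (iv) $x_p\ge0$ for $p\in U_2$; (v) for every chain $b\prec p_n\prec\cdots\prec p_1\prec a$ with $n\ge1$, $a,b\in A\cup U_1$, $p_i\in U_2$: $x_{p_1}+\cdots+x_{p_n}\le\lambda_a-\lambda_b$, where $\lambda_q$ means $x_q$ for $q\in U_1$; (vi) for every chain $p_1\prec\cdots\prec p_s\prec q$ with $q\in U_1$, $p_i\in U_2$: $x_{p_1}+\cdots+x_{p_s}\le x_q$. The marked order polytope is $\mathcal{O}_{P,A}(\lambda)=\mathcal{CO}_{P\setminus A,\emptyset}(\lambda)$ and the marked chain polytope is $\mathcal{C}_{P,A}(\lambda)=\mathcal{CO}_{\emptyset,P\setminus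 A}(\lambda)$. Accordingly $\mathcal{O}_{P,A_1}(\lambda^s)$ and $\mathcal{C}_{P,A_1}(\lambda^s)$ are the marked order and marked chain polytopes of $P$ with marked set $A_1$ and marking $\lambda^s$; they lie in $\mathbb{R}^{P\setminus A_1}=\mathbb{R}^{U_2}$. *)

From HB Require Import structures.
From mathcomp Require Import all_boot all_order all_algebra.
Set Implicit Arguments. Unset Strict Implicit. Unset Printing Implicit Defensive.
Import Order.TTheory GRing.Theory Num.Theory.

(* Points of R^D (D a subset of the finite poset P) are represented as
   functions P -> R that vanish outside D. *)

Section MarkedPoset.
Context {d : Order.disp_t} {P : finPOrderType d} {R : realFieldType}.

Definition marked_set (A : {set P}) : Prop :=
  (forall p : P, (forall q : P, ~~ (q < p)%O) -> p \in A) /\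
  (forall p : P, (forall q : P, ~~ (p < q)%O) -> p \in A).

Definition decomposition (A U1 U2 : {set P}) : Prop :=
  [disjoint U1 & U2] /\ U1 :|: U2 = ~: A.

Definition admissible (A U1 U2 : {set P}) : Prop :=
  decomposition A U1 U2 /\
  (forall u1 u2 : P, u1 \in U1 -> u2 \in U2 -> ~ (u1 < u2)%O).

Definition proj (U : {set P}) (x : P -> R) : P -> R :=
  fun p => if p \in U then x p else 0%R.

(* the marked chain-order polytope CO_{U1,U2}(lam) in R^(P \ A);
   lam is a real marking, only its values on A matter. *)
Definition chain_order_polytope (A U1 U2 : {set P}) (lam : P -> R)
  : (P -> R) -> Prop :=
  fun x =>
  let lamx := fun q => if q \in U1 then x q else lam q in
  (forall p, p \in A -> x p = 0%R) /\
  (forall p a, p \in U1 -> a \in A -> (p < a)%O -> (x p <= lam a)%R) /\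
  (forall q b, q \in U1 -> b \in A -> (b < q)%O -> (lam b <= x q)%R) /\
  (forall p q, p \in U1 -> q \in U1 -> (p < q)%O -> (x p <= x q)%R) /\
  (forall p, p \in U2 -> (0 <= x p)%R) /\
  (* (v) chains b < p_n < ... < p_1 < a, n >= 1, written s = [:: p_1; ...; p_n] *)
  (forall (a b : P) (s : seq P),
      a \in A :|: U1 -> b \in A :|: U1 -> s != [::] ->
      all (fun p => p \in U2) s ->
      path (fun u v => (v < u)%O) a s -> (b < last a s)%O ->
      (\sum_(p <- s) x p <= lamx a - lamx b)%R) /\
  (* (vi) chains p_1 < ... < p_s < q, s >= 1 *)
  (forall (q : P) (s : seq P),
      q \in U1 -> s != [::] -> all (fun p => p \in U2) s ->
      sorted (fun u v => (u < v)%O) (rcons s q) ->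
      (\sum_(p <- s) x p <= x q)%R).

Definition order_polytope (A : {set P}) (lam : P -> R) :=
  chain_order_polytope A (~: A) set0 lam.

Definition chain_polytope (A : {set P}) (lam : P -> R) :=
  chain_order_polytope A set0 (~: A) lam.

Definition lam_s (A : {set P}) (lam : P -> nat) (s : P -> R) : P -> R :=
  fun p => if p \in A then (lam p)%:R%R else s p.

End MarkedPoset.

From mathcomp Require Import all_boot all_order all_algebra.
From Stdlib Require Import FunctionalExtensionality.
Import Order.TTheory GRing.Theory Num.Theory.

Set Implicit Arguments.
Unset Strict Implicit.
Unset Printing Implicit Defensive.

Local Open Scope ring_scope.

(* Fixing the U1-coordinates of a point to those of s turns U1 into marked
   elements with marking s.  In the order polytope every inequality involving
   a U2-coordinate then is an inequality of O_{P,A1}(lambda^s), and the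
   inequalities among A1 are already satisfied by s.  In the chain-order
   polytope, the chain inequalities (v) through U2 are exactly those of
   C_{P,A1}(lambda^s); the inequalities (vi) follow from (v) by extending the
   chain down to a marked minimal element, whose marking is nonnegative. *)

Section MarkedChainOrderPolytopes.
Variables (d : Order.disp_t) (P : finPOrderType d) (R : realFieldType).
Implicit Types (A B U : {set P}) (f g x y z s : P -> R).

Definition glue U f g (p : P) : R := if p \in U then f p else g p.

Definition chain_bound B U x f : Prop :=
  forall (a b : P) (t : seq P),
    a \in B -> b \in B -> t != [::] -> all (fun p => p \in U) t ->
    path (fun u v => (v < u)%O) a t -> (b < last a t)%O ->
    \sum_(p <- t) x p <= f a - f b.

Lemma chain_bound_eq B U x1 x2 f1 f2 :
  {in U, x1 =1 x2} -> {in B, f1 =1 f2} ->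
  chain_bound B U x1 f1 -> chain_bound B U x2 f2.
Proof.
move=> x12 f12 bnd a b t aB bB tn tU at_ bt.
rewrite -(eq_big_seq _ (fun p pt => x12 p (allP tU p pt))) -!f12 //.
exact: bnd.
Qed.

Lemma exists_minimal_le (p : P) :
  exists2 m, (m <= p)%O & forall q, ~~ (q < m)%O.
Proof.
(* Below p, an element with fewest strict predecessors is minimal. *)
have [m mp min_m] := @arg_minnP _ p (fun q => (q <= p)%O)
  (fun q => #|[set r | (r < q)%O]|) (lexx p).
exists m => // q; apply/negP => qm.
have := min_m q (le_trans (ltW qm) mp); apply/negP; rewrite -ltnNge.
apply: proper_card; apply/properP; split.
- by apply/subsetP => r; rewrite !inE => /lt_trans; apply.
- by exists q; rewrite !inE ?qm ?ltxx.
Qed.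

Lemma exists_marked_lt A :
  (forall p : P, (forall q : P, ~~ (q < p)%O) -> p \in A) ->
  forall p, p \notin A -> exists2 b, b \in A & (b < p)%O.
Proof.
move=> minA p pA; have [m mp /minA mA] := exists_minimal_le p.
by exists m; rewrite // lt_neqAle mp andbT; apply: contraNneq pA => <-.
Qed.

(* Close the chain below by some [b] with [0 <= f b] and drop [f b]. *)
Lemma chain_bound_top B U x f :
  chain_bound B U x f ->
  (forall p, p \in U -> exists2 b, b \in B & (0 <= f b) && (b < p)%O) ->
  forall q t, q \in B -> t != [::] -> all (fun p => p \in U) t ->
    sorted (fun u v => (u < v)%O) (rcons t q) -> \sum_(p <- t) x p <= f q.
Proof.
move=> bnd below q [//|p t] qB _ tU sorted_t.
have [b bB /andP[fb0 bp]] := below p (allP tU p (mem_head p t)).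
rewrite -big_rev; apply: le_trans (_ : f q - f b <= f q); last by rewrite gerBl.
apply: bnd => //; first by rewrite rev_cons; case: (rev t).
- by rewrite all_rev.
- by rewrite -rev_sorted rev_rcons in sorted_t.
- by rewrite rev_cons last_rcons.
Qed.

Lemma all_in_set0 (t : seq P) : all (fun p => p \in set0) t -> t = [::].
Proof. by case: t => //= p t; rewrite inE. Qed.

Lemma order_polytopeP A f x :
  order_polytope A f x <->
  (forall p, p \in A -> x p = 0) /\
  (forall p q, (p < q)%O -> (p \notin A) || (q \notin A) ->
     glue A f x p <= glue A f x q).
Proof.
rewrite /order_polytope /chain_order_polytope /glue; split.
- move=> [x0 [Hi [Hii [Hiii _]]]]; split=> // p q pq.
  case pA: (p \in A); case qA: (q \in A) => //= _.
  + by apply: Hii; rewrite ?inE ?qA.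
  + by apply: Hi; rewrite ?inE ?pA.
  + by apply: Hiii; rewrite ?inE ?pA ?qA.
- move=> [x0 mono]; do !split=> //.
  + by move=> p a; rewrite inE => /negbTE pA aA /mono; rewrite pA aA; apply.
  + by move=> q b; rewrite inE => /negbTE qA bA /mono; rewrite qA bA; apply.
  + move=> p q; rewrite !inE => /negbTE pA /negbTE qA /mono.
    by rewrite pA qA; apply.
  + by move=> p; rewrite inE.
  + by move=> a b t _ _ tn /all_in_set0 t0; rewrite t0 in tn.
  + by move=> q t _ tn /all_in_set0 t0; rewrite t0 in tn.
Qed.

Lemma chain_polytopeP A f x :
  chain_polytope A f x <->
  (forall p, p \in A -> x p = 0) /\ (forall p, p \in ~: A -> 0 <= x p) /\
  chain_bound A (~: A) x f.
Proof.
rewrite /chain_polytope /chain_order_polytope; split.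
- move=> [x0 [_ [_ [_ [x_ge0 [bnd _]]]]]]; do 2!split=> //.
  move=> a b t aA bA.
  by have := bnd a b t; rewrite !in_set0 !setU0; apply.
- move=> [x0 [x_ge0 bnd]]; do !split=> //; try by move=> p; rewrite inE.
  by move=> a b t; rewrite !in_set0 !setU0; apply: bnd.
Qed.

Section Decomposition.
Variables (A U1 U2 : {set P}).
Hypothesis decA : decomposition A U1 U2.

Lemma setC_decomposition : ~: (A :|: U1) = U2.
Proof.
case: decA => disU12 defU; rewrite setCU -defU setIUl setICr set0U.
by apply/setIidPl; rewrite -disjoints_subset disjoint_sym.
Qed.

Lemma in_decomposition_A1 p : (p \in A :|: U1) = (p \notin U2).
Proof. by rewrite -setC_decomposition in_setC negbK. Qed.

Lemma in_decomposition_U2 p : p \notin A -> p \notin U1 -> p \in U2.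
Proof. by rewrite -setC_decomposition !inE => /negbTE -> /negbTE ->. Qed.

Lemma notin_A_of_U1 p : p \in U1 -> p \notin A.
Proof. by case: decA => _ defU pU1; rewrite -in_setC -defU inE pU1. Qed.

Lemma notin_U1_of_A p : p \in A -> p \notin U1.
Proof. exact: contraL (@notin_A_of_U1 p). Qed.

Lemma notin_A_of_U2 p : p \in U2 -> p \notin A.
Proof. by rewrite -setC_decomposition !inE negb_or => /andP[]. Qed.

Lemma notin_U1_of_U2 p : p \in U2 -> p \notin U1.
Proof. by rewrite -setC_decomposition !inE negb_or => /andP[]. Qed.

Lemma proj_eq_in U x y : proj U x = proj U y -> {in U, x =1 y}.
Proof.
by move=> /(congr1 (fun h => h _)) xy p pU; have := xy p; rewrite /proj pU.
Qed.

Lemma proj_glue_U1 s z : proj U1 (glue U1 s z) = proj U1 s.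
Proof.
by apply: functional_extensionality => p; rewrite /proj /glue; case: (p \in U1).
Qed.

Lemma proj_glue_U2 s z :
  (forall p, p \in A :|: U1 -> z p = 0) -> proj U2 (glue U1 s z) = z.
Proof.
move=> z0; apply: functional_extensionality => p; rewrite /proj /glue.
case: ifPn => [/notin_U1_of_U2/negbTE -> // | pU2].
by rewrite z0 ?in_decomposition_A1.
Qed.

Variable lam : P -> nat.
Let lamR (p : P) : R := (lam p)%:R.

Lemma glue_A_lam_s s y z :
  {in U1, y =1 s} -> {in U2, y =1 z} ->
  glue A lamR y =1 glue (A :|: U1) (lam_s A lam s) z.
Proof.
move=> ys yz p; rewrite /glue /lam_s inE.
case: (boolP (p \in A)) => //= pA; case: (boolP (p \in U1)) => [/ys // | pU1].
by rewrite yz // in_decomposition_U2.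
Qed.

Lemma glue_U1_lam_s s y :
  {in U1, y =1 s} -> {in A :|: U1, glue U1 y lamR =1 lam_s A lam s}.
Proof.
move=> ys p; rewrite /glue /lam_s inE => /orP[pA | pU1].
  by rewrite pA (negbTE (notin_U1_of_A pA)).
by rewrite pU1 (negbTE (notin_A_of_U1 pU1)) ys.
Qed.

Lemma order_polytope_fiber s :
  order_polytope A lamR s -> forall z,
  (exists y, order_polytope A lamR y /\ proj U1 y = proj U1 s /\ proj U2 y = z)
  <-> order_polytope (A :|: U1) (lam_s A lam s) z.
Proof.
move=> /order_polytopeP[_ s_mono] z; split.
- move=> [y [/order_polytopeP[_ y_mono] [ys <-]]].
  have glue_y := glue_A_lam_s (proj_eq_in ys) (fun p pU2 => esym (ifT _ _ pU2)).
  apply/order_polytopeP; split=> [p | p q pq out_pq].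
    by rewrite in_decomposition_A1 /proj => /negbTE ->.
  rewrite -!glue_y; apply: y_mono pq _; move: out_pq.
  by rewrite !inE !negb_or => /orP[/andP[-> _] | /andP[-> _]]; rewrite ?orbT.
- move=> /order_polytopeP[z0 z_mono]; exists (glue U1 s z).
  split; last by split; [apply: proj_glue_U1 | apply: proj_glue_U2].
  have glue_z :
      glue A lamR (glue U1 s z) =1 glue (A :|: U1) (lam_s A lam s) z.
    by apply: glue_A_lam_s => p pU;
      rewrite /glue ?pU ?(negbTE (notin_U1_of_U2 pU)).
  have glue_s :
      {in A :|: U1, glue (A :|: U1) (lam_s A lam s) z =1 glue A lamR s}.
    by move=> p pA1; rewrite /glue pA1 /lam_s; case: ifP.
  apply/order_polytopeP; split=> [p pA | p q pq out_pq].
    by rewrite /glue (negbTE (notin_U1_of_A pA)) z0 // inE pA.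
  rewrite !glue_z.
  have [/andP[pA1 qA1] | ] := boolP ((p \in A :|: U1) && (q \in A :|: U1)).
    by rewrite !glue_s //; apply: s_mono.
  by rewrite negb_and; apply: z_mono.
Qed.

Hypothesis minA : forall p : P, (forall q : P, ~~ (q < p)%O) -> p \in A.

Lemma chain_order_polytope_fiber s :
  chain_order_polytope A U1 U2 lamR s -> forall z,
  (exists y, chain_order_polytope A U1 U2 lamR y /\
             proj U1 y = proj U1 s /\ proj U2 y = z)
  <-> chain_polytope (A :|: U1) (lam_s A lam s) z.
Proof.
move=> [_ [s_i [s_ii [s_iii _]]]] z; split.
- move=> [y [[_ [_ [_ [_ [y_ge0 [y_bnd _]]]]]] [ys <-]]].
  apply/chain_polytopeP; rewrite setC_decomposition; split; [|split].
  + by move=> p; rewrite in_decomposition_A1 /proj => /negbTE ->.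
  + by move=> p pU2; rewrite /proj pU2; apply: y_ge0.
  + apply: (chain_bound_eq (f1 := glue U1 y lamR)) y_bnd.
      by move=> p pU2; rewrite /proj pU2.
    exact: glue_U1_lam_s (proj_eq_in ys).
- move/chain_polytopeP; rewrite setC_decomposition => -[z0 [z_ge0 z_bnd]].
  set y := glue U1 s z.
  have ys : {in U1, y =1 s} by move=> p pU1; rewrite /y /glue pU1.
  have yz : {in U2, y =1 z}.
    by move=> p pU2; rewrite /y /glue (negbTE (notin_U1_of_U2 pU2)).
  have y_bnd : chain_bound (A :|: U1) U2 y (glue U1 y lamR).
    apply: chain_bound_eq z_bnd => p; first by move/yz.
    by move/(glue_U1_lam_s ys).
  exists y; split; last by split; [apply: proj_glue_U1 | apply: proj_glue_U2].
  do !split.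
  + by move=> p pA; rewrite /y /glue (negbTE (notin_U1_of_A pA)) z0 // inE pA.
  + by move=> p a pU1 aA pa; rewrite ys //; apply: s_i.
  + by move=> q b qU1 bA bq; rewrite ys //; apply: s_ii.
  + by move=> p q pU1 qU1 pq; rewrite !ys //; apply: s_iii.
  + by move=> p pU2; rewrite yz //; apply: z_ge0.
  + exact: y_bnd.
  + have below p : p \in U2 ->
        exists2 b, b \in A :|: U1 & (0 <= glue U1 y lamR b) && (b < p)%O.
      move=> pU2; have [b bA bp] := exists_marked_lt minA (notin_A_of_U2 pU2).
      exists b; first by rewrite inE bA.
      by rewrite bp andbT /glue (negbTE (notin_U1_of_A bA)) ler0n.
    move=> q t qU1 tn tU sorted_t.
    have qA1 : q \in A :|: U1 by rewrite inE qU1 orbT.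
    have := chain_bound_top y_bnd below qA1 tn tU sorted_t.
    by rewrite /glue qU1.
Qed.

End Decomposition.
End MarkedChainOrderPolytopes.

Theorem lemma1p15 (d : Order.disp_t) (P : finPOrderType d) (R : realFieldType)
  (A : {set P}) (lam : P -> nat) (U1 U2 : {set P}) :
  marked_set A ->
  admissible A U1 U2 ->
  let A1 := A :|: U1 in
  let lamR := fun p => ((lam p)%:R : R)%R in
  (forall s : P -> R, order_polytope A lamR s ->
     forall z : P -> R,
       (exists y, order_polytope A lamR y /\ proj U1 y = proj U1 s /\ proj U2 y = z)
       <-> order_polytope A1 (lam_s A lam s) z) /\
  (forall s : P -> R, chain_order_polytope A U1 U2 lamR s ->
     forall z : P -> R,
       (exists y, chain_order_polytope A U1 U2 lamR y /\ proj U1 y = proj U1 s /\ proj U2 y = z)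
       <-> chain_polytope A1 (lam_s A lam s) z).
Proof.
move=> [minA _] [decA _] A1 lamR; split.
- exact: order_polytope_fiber.
- exact: chain_order_polytope_fiber.
Qed.
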